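(* Let $\mathcal{X},\mathcal{Y}$ be finite. For a distribution $Q$ on $\mathcal{X}$ and a false channel $\tilde W$, the false mutual information $\tilde I(Q,\tilde W)$ is: (1) non-negative; (2) concave in $Q$ (for fixed $\tilde W$); (3) convex in $\tilde W$ (for fixed $Q$); (4) bounded above by $\sigma\log|\mathcal{X}|$, where $\sigma=\max_x\sum_y\tilde W(y|x)$.
   Context: A false channel (false conditional probability) is any non-negative function $\tilde W(y|x)$ on $\mathcal{X}\times\mathcal{Y}$ (not necessarily summing to $1$ over $y$). The false mutual information is $$\tilde I(Q,\tilde W)=\sum_{x,y}Q(x)\tilde W(y|x)\log\frac{\tilde W(y|x)}{\sum_{x'}Q(x')\tilde W(y|x')},$$ where terms with $Q(x)\tilde W(y|x)=0$ are taken to be $0$ (convention $0\log0=0$). *)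

From Stdlib Require Export Reals.
Open Scope R_scope.

(* Finite alphabets X = {0,...,n-1}, Y = {0,...,m-1}. *)

Fixpoint fsum (n : nat) (f : nat -> R) : R :=
  match n with
  | O => 0
  | S k => fsum k f + f k
  end.

(* fmax n f = max_{x < n} f x  (for n >= 1; 0 for n = 0) *)
Fixpoint fmax (n : nat) (f : nat -> R) : R :=
  match n with
  | O => 0
  | S k => match k with
           | O => f 0%nat
           | _ => Rmax (fmax k f) (f k)
           end
  end.

Definition is_distr (n : nat) (Q : nat -> R) : Prop :=
  (forall x, (x < n)%nat -> 0 <= Q x) /\ fsum n Q = 1.

(* W is a false channel: W x y = W~(y|x) >= 0 on X x Y *)
Definition false_channel (n m : nat) (W : nat -> nat -> R) : Prop :=
  forall x y, (x < n)%nat -> (y < m)%nat -> 0 <= W x y.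

Definition outp (n : nat) (Q : nat -> R) (W : nat -> nat -> R) (y : nat) : R :=
  fsum n (fun x' => Q x' * W x' y).

(* false mutual information, with the convention 0 log 0 = 0:
   terms with Q(x) W~(y|x) = 0 are 0. *)
Definition false_MI (n m : nat) (Q : nat -> R) (W : nat -> nat -> R) : R :=
  fsum n (fun x => fsum m (fun y =>
    if Req_EM_T (Q x * W x y) 0 then 0
    else Q x * W x y * ln (W x y / outp n Q W y))).

From Stdlib Require Import Reals Lra Lia Psatz.
Open Scope R_scope.

(* Write [outp y = sum_x Q x W x y]; each term of [I] is [Q x W x y ln (W x y / outp y)],
   and [Q x W x y <= outp y].
   Nonnegativity: termwise [a ln (a / b) >= a - b], and these lower bounds sum to
   [sum_y outp y (1 - sum_x Q x) = 0].
   Concavity in [Q]: [I = sum_x Q x sum_y W ln W - sum_y outp y ln (outp y)], whose first part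
   is linear in [Q], while [outp] is linear in [Q] and [t ln t] is convex.
   Convexity in [W]: [outp] is linear in [W] and [(w, p) |-> w ln (w / p)] is jointly convex.
   Upper bound: [ln (W x y / outp y) <= - ln (Q x)], so
   [I <= sum_x (- Q x ln (Q x)) sum_y W x y <= sigma H(Q) <= sigma ln |X|]. *)

Lemma ln_le_sub_1 t : 0 < t -> ln t <= t - 1.
Proof.
  intros Ht. pose proof (exp_ineq1_le (ln t)) as H. rewrite exp_ln in H; lra.
Qed.

Lemma ln_div x y : 0 < x -> 0 < y -> ln (x / y) = ln x - ln y.
Proof.
  intros Hx Hy. unfold Rdiv.
  rewrite ln_mult, ln_Rinv; [ring | lra | lra | now apply Rinv_0_lt_compat].
Qed.

Lemma ln_le x y : 0 < x -> x <= y -> ln x <= ln y.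
Proof. intros Hx [Hxy | <-]; [left; now apply ln_increasing | lra]. Qed.

(* [a ln (a/b)] is the supremum over [r > 0] of these affine functions of
   [(a, b)], attained at [r = a/b]; joint convexity follows. *)
Lemma mul_ln_div_ge_affine a b r : 0 <= a -> 0 <= b -> (0 < a -> 0 < b) -> 0 < r ->
  a * (1 + ln r) - r * b <= a * ln (a / b).
Proof.
  intros Ha Hb Hab Hr. destruct (Req_dec a 0) as [-> | Ha0]; [nra |].
  assert (Ha' : 0 < a) by lra. specialize (Hab Ha').
  assert (Hrba : 0 < r * b / a) by (apply Rdiv_lt_0_compat; nra).
  pose proof (ln_le_sub_1 _ Hrba) as Hln.
  rewrite ln_div, ln_mult in Hln by nra. rewrite ln_div by lra.
  assert (a * (r * b / a) = r * b) by (field; lra).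
  nra.
Qed.

Lemma mul_ln_div_convex w1 w2 p1 p2 l :
  0 <= w1 -> 0 <= w2 -> 0 <= p1 -> 0 <= p2 ->
  (0 < w1 -> 0 < p1) -> (0 < w2 -> 0 < p2) -> 0 <= l <= 1 ->
  (l * w1 + (1 - l) * w2) * ln ((l * w1 + (1 - l) * w2) / (l * p1 + (1 - l) * p2))
  <= l * (w1 * ln (w1 / p1)) + (1 - l) * (w2 * ln (w2 / p2)).
Proof.
  intros Hw1 Hw2 Hp1 Hp2 Hwp1 Hwp2 Hl.
  set (w := l * w1 + (1 - l) * w2). set (p := l * p1 + (1 - l) * p2).
  destruct (Req_dec w 0) as [Hw0 | Hw0].
  - assert (E1 : l * w1 = 0) by (unfold w in Hw0; nra).
    assert (E2 : (1 - l) * w2 = 0) by (unfold w in Hw0; nra).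
    rewrite Hw0, Rmult_0_l, <- !Rmult_assoc, E1, E2. lra.
  - assert (Hw : 0 < w) by (unfold w in *; nra).
    assert (Hp : 0 < p).
    { unfold w, p in *. destruct (Rlt_dec 0 (l * w1)) as [C | C].
      - assert (0 < l) by nra. assert (0 < p1) by (apply Hwp1; nra). nra.
      - assert (0 < 1 - l) by nra. assert (0 < p2) by (apply Hwp2; nra). nra. }
    assert (Hr : 0 < w / p) by (apply Rdiv_lt_0_compat; lra).
    (* Both affine bounds at the optimal point [r = w/p] of the mixture. *)
    pose proof (mul_ln_div_ge_affine w1 p1 (w / p) Hw1 Hp1 Hwp1 Hr).
    pose proof (mul_ln_div_ge_affine w2 p2 (w / p) Hw2 Hp2 Hwp2 Hr).
    assert (Hrp : w / p * p = w) by (field; lra).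
    assert (l * (w1 * (1 + ln (w / p)) - w / p * p1)
            + (1 - l) * (w2 * (1 + ln (w / p)) - w / p * p2)
            = w * (1 + ln (w / p)) - w / p * p) by (unfold w, p; ring).
    rewrite Hrp in *. nra.
Qed.

Lemma xlnx_convex a b l : 0 <= a -> 0 <= b -> 0 <= l <= 1 ->
  (l * a + (1 - l) * b) * ln (l * a + (1 - l) * b)
  <= l * (a * ln a) + (1 - l) * (b * ln b).
Proof.
  intros Ha Hb Hl.
  pose proof (mul_ln_div_convex a b 1 1 l Ha Hb ltac:(lra) ltac:(lra)
                ltac:(lra) ltac:(lra) Hl) as H.
  replace (l * 1 + (1 - l) * 1) with 1 in H by ring.
  now rewrite !Rdiv_1_r in H.
Qed.

Lemma fsum_ext n f g : (forall x, (x < n)%nat -> f x = g x) -> fsum n f = fsum n g.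
Proof. induction n as [|n IH]; intros H; simpl; [reflexivity |]. rewrite IH, H; auto. Qed.

Lemma fsum_le n f g : (forall x, (x < n)%nat -> f x <= g x) -> fsum n f <= fsum n g.
Proof.
  induction n as [|n IH]; intros H; simpl; [lra |].
  apply Rplus_le_compat; auto.
Qed.

Lemma fsum_plus n f g : fsum n (fun x => f x + g x) = fsum n f + fsum n g.
Proof. induction n as [|n IH]; simpl; [ring | rewrite IH; ring]. Qed.

Lemma fsum_scal n c f : fsum n (fun x => c * f x) = c * fsum n f.
Proof. induction n as [|n IH]; simpl; [ring | rewrite IH; ring]. Qed.

Lemma fsum_minus n f g : fsum n (fun x => f x - g x) = fsum n f - fsum n g.
Proof. induction n as [|n IH]; simpl; [ring | rewrite IH; ring]. Qed.

Lemma fsum_lin n a b f g :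
  fsum n (fun x => a * f x + b * g x) = a * fsum n f + b * fsum n g.
Proof. now rewrite fsum_plus, !fsum_scal. Qed.

Lemma fsum_const n c : fsum n (fun _ => c) = INR n * c.
Proof. induction n as [|n IH]; simpl fsum; [simpl; ring | rewrite IH, S_INR; ring]. Qed.

Lemma fsum_swap n m f :
  fsum n (fun x => fsum m (fun y => f x y)) = fsum m (fun y => fsum n (fun x => f x y)).
Proof.
  induction n as [|n IH]; simpl.
  - induction m as [|m IHm]; simpl; [reflexivity | rewrite <- IHm; ring].
  - now rewrite IH, fsum_plus.
Qed.

Lemma fsum_nonneg n f : (forall x, (x < n)%nat -> 0 <= f x) -> 0 <= fsum n f.
Proof.
  intros H. replace 0 with (fsum n (fun _ => 0)) by (rewrite fsum_const; ring).
  now apply fsum_le.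
Qed.

Lemma fsum_ge_term n f x :
  (forall x, (x < n)%nat -> 0 <= f x) -> (x < n)%nat -> f x <= fsum n f.
Proof.
  induction n as [|n IH]; simpl; intros Hf Hx; [lia |].
  destruct (Nat.eq_dec x n) as [-> | Hxn].
  - assert (0 <= fsum n f) by (apply fsum_nonneg; auto). lra.
  - assert (f x <= fsum n f) by (apply IH; auto; lia).
    assert (0 <= f n) by auto. lra.
Qed.

Lemma fmax_ge n f x : (x < n)%nat -> f x <= fmax n f.
Proof.
  induction n as [|[|n] IH]; intros Hx; [lia | simpl; replace x with 0%nat by lia; lra |].
  change (fmax (S (S n)) f) with (Rmax (fmax (S n) f) (f (S n))).
  destruct (Nat.eq_dec x (S n)) as [-> | Hxn]; [apply Rmax_r |].
  eapply Rle_trans; [apply IH; lia | apply Rmax_l].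
Qed.

Lemma distr_card_pos n Q : is_distr n Q -> (0 < n)%nat.
Proof. intros [_ HS]. destruct n; [simpl in HS; lra | lia]. Qed.

Lemma distr_le_1 n Q x : is_distr n Q -> (x < n)%nat -> Q x <= 1.
Proof. intros [HQ HS] Hx. rewrite <- HS. now apply fsum_ge_term. Qed.

Definition entropy (n : nat) (Q : nat -> R) : R := fsum n (fun x => - (Q x * ln (Q x))).

Lemma neg_xlnx_nonneg q : 0 <= q <= 1 -> 0 <= - (q * ln q).
Proof.
  intros Hq. destruct (Req_dec q 0) as [-> | Hq0]; [lra |].
  assert (ln q <= 0) by (rewrite <- ln_1; apply ln_le; lra). nra.
Qed.

Lemma entropy_le_ln_card n Q : is_distr n Q -> entropy n Q <= ln (INR n).
Proof.
  intros HQ. pose proof (distr_card_pos n Q HQ) as Hn. destruct HQ as [HQ HS].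
  assert (HN : 0 < INR n) by (apply lt_0_INR; lia).
  assert (HN' : 0 < / INR n) by (now apply Rinv_0_lt_compat).
  apply Rle_trans with (fsum n (fun x => ln (INR n) * Q x + (-1) * Q x + / INR n)).
  - apply fsum_le; intros x Hx. specialize (HQ x Hx).
    pose proof (mul_ln_div_ge_affine (Q x) (/ INR n) 1 HQ
                  ltac:(lra) (fun _ => HN') Rlt_0_1) as Hb.
    destruct (Req_dec (Q x) 0) as [-> | HQ0]; [nra |].
    rewrite ln_1, ln_div, ln_Rinv in Hb by lra. lra.
  - rewrite !fsum_plus, !fsum_scal, fsum_const, HS. right. field. lra.
Qed.

Section FalseMutualInformation.

Variables n m : nat.

Lemma outp_ge_term Q W x y : (forall x, (x < n)%nat -> 0 <= Q x) ->
  false_channel n m W -> (x < n)%nat -> (y < m)%nat -> Q x * W x y <= outp n Q W y.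
Proof.
  intros HQ HW Hx Hy. unfold outp.
  apply (fsum_ge_term n (fun x' => Q x' * W x' y)); auto.
  intros; apply Rmult_le_pos; auto.
Qed.

Lemma outp_nonneg Q W y : (forall x, (x < n)%nat -> 0 <= Q x) ->
  false_channel n m W -> (y < m)%nat -> 0 <= outp n Q W y.
Proof. intros HQ HW Hy. apply fsum_nonneg; intros; apply Rmult_le_pos; auto. Qed.

Lemma outp_pos Q W x y : (forall x, (x < n)%nat -> 0 <= Q x) ->
  false_channel n m W -> (x < n)%nat -> (y < m)%nat ->
  0 < Q x -> 0 < W x y -> 0 < outp n Q W y.
Proof.
  intros HQ HW Hx Hy HQx HWxy. pose proof (outp_ge_term Q W x y HQ HW Hx Hy). nra.
Qed.

Lemma outp_lin_input a b Q1 Q2 W y :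
  outp n (fun x => a * Q1 x + b * Q2 x) W y = a * outp n Q1 W y + b * outp n Q2 W y.
Proof. unfold outp. rewrite <- fsum_lin. apply fsum_ext; intros; ring. Qed.

Lemma outp_lin_channel a b Q W1 W2 y :
  outp n Q (fun x y => a * W1 x y + b * W2 x y) y = a * outp n Q W1 y + b * outp n Q W2 y.
Proof. unfold outp. rewrite <- fsum_lin. apply fsum_ext; intros; ring. Qed.

(* Terms with [Q x * W x y = 0] vanish anyway, whatever junk value [ln] takes. *)
Lemma false_MI_eq_sum Q W : false_MI n m Q W =
  fsum n (fun x => fsum m (fun y => Q x * W x y * ln (W x y / outp n Q W y))).
Proof.
  apply fsum_ext; intros x _; apply fsum_ext; intros y _.
  destruct (Req_EM_T (Q x * W x y) 0) as [-> | _]; [ring | reflexivity].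
Qed.

Lemma false_MI_decomp Q W : (forall x, (x < n)%nat -> 0 <= Q x) -> false_channel n m W ->
  false_MI n m Q W = fsum n (fun x => Q x * fsum m (fun y => W x y * ln (W x y)))
    - fsum m (fun y => outp n Q W y * ln (outp n Q W y)).
Proof.
  intros HQ HW. rewrite false_MI_eq_sum.
  transitivity (fsum n (fun x => fsum m (fun y => Q x * W x y * ln (W x y)
                  - Q x * W x y * ln (outp n Q W y)))).
  { apply fsum_ext; intros x Hx; apply fsum_ext; intros y Hy.
    assert (0 <= Q x) by auto. assert (0 <= W x y) by auto.
    destruct (Req_dec (Q x) 0) as [-> | HQ0]; [ring |].
    destruct (Req_dec (W x y) 0) as [-> | HW0]; [ring |].
    rewrite ln_div; [ring | lra | apply (outp_pos Q W x y); auto; lra]. }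
  rewrite (fsum_ext n _ (fun x => fsum m (fun y => Q x * W x y * ln (W x y))
             - fsum m (fun y => Q x * W x y * ln (outp n Q W y))))
    by (intros; apply fsum_minus).
  rewrite fsum_minus, fsum_swap with (f := fun x y => Q x * W x y * ln (outp n Q W y)).
  f_equal; apply fsum_ext; intros.
  - rewrite <- fsum_scal. apply fsum_ext; intros; ring.
  - unfold outp. rewrite Rmult_comm, <- fsum_scal. apply fsum_ext; intros; ring.
Qed.

Lemma false_MI_nonneg Q W : is_distr n Q -> false_channel n m W -> 0 <= false_MI n m Q W.
Proof.
  intros [HQ HS] HW. rewrite false_MI_eq_sum.
  apply Rle_trans with
    (fsum n (fun x => fsum m (fun y => Q x * W x y - Q x * outp n Q W y))).
  - rewrite fsum_swap. apply fsum_nonneg; intros y Hy.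
    rewrite fsum_minus, (fsum_ext n (fun x => Q x * outp n Q W y) (fun x => outp n Q W y * Q x)) by (intros; ring).
    rewrite fsum_scal, HS. unfold outp. lra.
  - apply fsum_le; intros x Hx; apply fsum_le; intros y Hy.
    assert (0 <= Q x) by auto. assert (0 <= W x y) by auto.
    destruct (Req_dec (Q x) 0) as [-> | HQ0]; [lra |].
    pose proof (mul_ln_div_ge_affine (W x y) (outp n Q W y) 1 ltac:(assumption)
      ltac:(apply outp_nonneg; auto)
      ltac:(intros; apply (outp_pos Q W x y); auto; lra) Rlt_0_1) as Hb.
    rewrite ln_1 in Hb.
    rewrite Rmult_assoc, <- Rmult_minus_distr_l. apply Rmult_le_compat_l; lra.
Qed.

Lemma false_MI_concave_input W Q1 Q2 l : false_channel n m W ->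
  is_distr n Q1 -> is_distr n Q2 -> 0 <= l <= 1 ->
  l * false_MI n m Q1 W + (1 - l) * false_MI n m Q2 W
    <= false_MI n m (fun x => l * Q1 x + (1 - l) * Q2 x) W.
Proof.
  intros HW [HQ1 _] [HQ2 _] Hl.
  assert (HQ : forall x, (x < n)%nat -> 0 <= l * Q1 x + (1 - l) * Q2 x).
  { intros x Hx. specialize (HQ1 x Hx). specialize (HQ2 x Hx). nra. }
  rewrite !false_MI_decomp by auto.
  assert (fsum n (fun x => (l * Q1 x + (1 - l) * Q2 x) * fsum m (fun y => W x y * ln (W x y)))
          = l * fsum n (fun x => Q1 x * fsum m (fun y => W x y * ln (W x y)))
            + (1 - l) * fsum n (fun x => Q2 x * fsum m (fun y => W x y * ln (W x y))))
    by (rewrite <- fsum_lin; apply fsum_ext; intros; ring).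
  assert (fsum m (fun y => outp n (fun x => l * Q1 x + (1 - l) * Q2 x) W y
                           * ln (outp n (fun x => l * Q1 x + (1 - l) * Q2 x) W y))
          <= l * fsum m (fun y => outp n Q1 W y * ln (outp n Q1 W y))
             + (1 - l) * fsum m (fun y => outp n Q2 W y * ln (outp n Q2 W y))).
  { rewrite <- fsum_lin. apply fsum_le; intros y Hy. rewrite outp_lin_input.
    apply xlnx_convex; auto; apply outp_nonneg; auto. }
  lra.
Qed.

Lemma false_MI_convex_channel Q W1 W2 l : is_distr n Q ->
  false_channel n m W1 -> false_channel n m W2 -> 0 <= l <= 1 ->
  false_MI n m Q (fun x y => l * W1 x y + (1 - l) * W2 x y)
    <= l * false_MI n m Q W1 + (1 - l) * false_MI n m Q W2.
Proof.
  intros [HQ _] HW1 HW2 Hl. rewrite !false_MI_eq_sum, <- fsum_lin.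
  apply fsum_le; intros x Hx. rewrite <- fsum_lin.
  apply fsum_le; intros y Hy. rewrite outp_lin_channel.
  assert (0 <= Q x) by auto. assert (0 <= W1 x y) by auto. assert (0 <= W2 x y) by auto.
  destruct (Req_dec (Q x) 0) as [-> | HQ0]; [lra |].
  pose proof (mul_ln_div_convex (W1 x y) (W2 x y) (outp n Q W1 y) (outp n Q W2 y) l
    ltac:(assumption) ltac:(assumption)
    ltac:(apply outp_nonneg; auto) ltac:(apply outp_nonneg; auto)
    ltac:(intros; apply (outp_pos Q W1 x y); auto; lra)
    ltac:(intros; apply (outp_pos Q W2 x y); auto; lra) Hl).
  rewrite !(Rmult_assoc (Q x)). nra.
Qed.

Lemma false_MI_le_entropy_weighted Q W : (forall x, (x < n)%nat -> 0 <= Q x) ->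
  false_channel n m W ->
  false_MI n m Q W <= fsum n (fun x => - (Q x * ln (Q x)) * fsum m (fun y => W x y)).
Proof.
  intros HQ HW. rewrite false_MI_eq_sum.
  apply fsum_le; intros x Hx. rewrite <- fsum_scal. apply fsum_le; intros y Hy.
  assert (0 <= Q x) by auto. assert (0 <= W x y) by auto.
  destruct (Req_dec (Q x) 0) as [-> | HQ0]; [lra |].
  destruct (Req_dec (W x y) 0) as [-> | HW0]; [lra |].
  assert (Hle := outp_ge_term Q W x y HQ HW Hx Hy).
  assert (Hln : ln (Q x * W x y) <= ln (outp n Q W y)) by (apply ln_le; nra).
  rewrite ln_mult in Hln by lra. rewrite ln_div by nra.
  assert (0 < Q x * W x y) by nra. nra.
Qed.

Lemma false_MI_le_ln_card Q W : is_distr n Q -> false_channel n m W ->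
  false_MI n m Q W <= fmax n (fun x => fsum m (fun y => W x y)) * ln (INR n).
Proof.
  intros HQd HW. pose proof HQd as [HQ _].
  set (sigma := fmax n (fun x => fsum m (fun y => W x y))).
  assert (Hsigma : forall x, (x < n)%nat -> fsum m (fun y => W x y) <= sigma)
    by (intros; now apply (fmax_ge n (fun x => fsum m (fun y => W x y)))).
  assert (Hsigma0 : 0 <= sigma).
  { pose proof (distr_card_pos n Q HQd).
    apply Rle_trans with (fsum m (fun y => W 0%nat y)); [|apply Hsigma; lia].
    apply fsum_nonneg; intros; apply HW; lia. }
  apply Rle_trans with (sigma * entropy n Q).
  - eapply Rle_trans; [now apply false_MI_le_entropy_weighted |].
    unfold entropy. rewrite <- fsum_scal. apply fsum_le; intros x Hx.
    assert (0 <= - (Q x * ln (Q x)))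
      by (apply neg_xlnx_nonneg; split; [auto | now apply (distr_le_1 n)]).
    specialize (Hsigma x Hx). nra.
  - apply Rmult_le_compat_l; [assumption | now apply entropy_le_ln_card].
Qed.

End FalseMutualInformation.

Theorem lemma6 (n m : nat) :
  (forall (Q : nat -> R) (W : nat -> nat -> R),
     is_distr n Q -> false_channel n m W -> 0 <= false_MI n m Q W) /\
  (forall (W : nat -> nat -> R) (Q1 Q2 : nat -> R) (lam : R),
     false_channel n m W -> is_distr n Q1 -> is_distr n Q2 ->
     0 <= lam <= 1 ->
     lam * false_MI n m Q1 W + (1 - lam) * false_MI n m Q2 W
       <= false_MI n m (fun x => lam * Q1 x + (1 - lam) * Q2 x) W) /\
  (forall (Q : nat -> R) (W1 W2 : nat -> nat -> R) (lam : R),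
     is_distr n Q -> false_channel n m W1 -> false_channel n m W2 ->
     0 <= lam <= 1 ->
     false_MI n m Q (fun x y => lam * W1 x y + (1 - lam) * W2 x y)
       <= lam * false_MI n m Q W1 + (1 - lam) * false_MI n m Q W2) /\
  (forall (Q : nat -> R) (W : nat -> nat -> R),
     is_distr n Q -> false_channel n m W ->
     false_MI n m Q W <= fmax n (fun x => fsum m (fun y => W x y)) * ln (INR n)).
Proof.
  split; [|split; [|split]]; intros.
  - now apply false_MI_nonneg.
  - now apply false_MI_concave_input.
  - now apply false_MI_convex_channel.
  - now apply false_MI_le_ln_card.
Qed.
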